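(* Every block graph is hereditarily connected-domishold. Every trivially perfect graph is hereditarily connected-domishold.
   Context: A block graph is a graph in which every block (maximal connected subgraph without a cut vertex) is a complete graph. A trivially perfect graph is a graph with no induced subgraph isomorphic to $P_4$ or $C_4$. A connected dominating set of a connected graph $G$ is a set $S\subseteq V(G)$ such that every vertex outside $S$ has a neighbor in $S$ and $G[S]$ is connected; $G$ is connected-domishold if there exist $w:V(G)\to\mathbb{R}_{\ge0}$, $t\in\mathbb{R}_{\ge0}$ with $\sum_{x\in S}w(x)\ge t$ iff $S$ is a connected dominating set, for all $S\subseteq V(G)$; disconnected graphs are connected-domishold by convention. $G$ is hereditarily connected-domishold if all its induced subgraphs are connected-domishold. *)

(* Finite simple graphs: a symmetric irreflexive relation
   e : rel T on a finite type T. Induced subgraphs G[U] are given by vertex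
   sets U : {set T}. *)
From HB Require Import structures.
From mathcomp Require Import all_boot all_order all_algebra.
Set Implicit Arguments. Unset Strict Implicit. Unset Printing Implicit Defensive.
Import Order.TTheory GRing.Theory Num.Theory.

Section Graphs.
Variables (T : finType) (e : rel T).

Definition adj_in (U : {set T}) : rel T :=
  [rel x y | [&& x \in U, y \in U & e x y]].

(* G[U] is connected: nonempty, and any two of its vertices are joined by a
   path of G[U]. (The null graph is regarded as not connected.) *)
Definition connected_in (U : {set T}) : bool :=
  (U != set0) && [forall x in U, forall y in U, connect (adj_in U) x y].

Definition cds_in (U S : {set T}) : bool :=
  [&& S \subset U,
      [forall x in U :\: S, exists y in S, e x y]
    & connected_in S].

Definition cut_vertex_in (B : {set T}) (v : T) : bool :=
  (v \in B) && [exists x in B :\ v, exists y in B :\ v,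
                  ~~ connect (adj_in (B :\ v)) x y].

Definition biconn (B : {set T}) : bool :=
  connected_in B && [forall v, ~~ cut_vertex_in B v].

(* blocks: maximal connected subgraphs without a cut vertex (maximal
   such subgraphs are always induced, so vertex sets suffice) *)
Definition is_block (B : {set T}) : bool := maxset biconn B.

Definition is_clique (B : {set T}) : bool :=
  [forall x in B, forall y in B, (x != y) ==> e x y].

Definition block_graph : bool := [forall B, is_block B ==> is_clique B].

Definition distinct4 (a b c d : T) : bool :=
  uniq [:: a; b; c; d].

Definition induced_P4 (a b c d : T) : bool :=
  [&& distinct4 a b c d, e a b, e b c, e c d, ~~ e a c, ~~ e b d & ~~ e a d].

Definition induced_C4 (a b c d : T) : bool :=
  [&& distinct4 a b c d, e a b, e b c, e c d, e d a, ~~ e a c & ~~ e b d].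

Definition trivially_perfect : Prop :=
  forall a b c d : T, ~~ induced_P4 a b c d /\ ~~ induced_C4 a b c d.

Local Open Scope ring_scope.

(* G[U] is connected-domishold (weights in a real field R); disconnected
   graphs are connected-domishold by convention *)
Definition connected_domishold (R : realFieldType) (U : {set T}) : Prop :=
  connected_in U ->
  exists (w : T -> R) (t : R),
    (forall x, 0 <= w x) /\ 0 <= t /\
    forall S : {set T}, S \subset U ->
      (t <= \sum_(x in S) w x) <-> cds_in U S.

Definition hereditarily_connected_domishold (R : realFieldType) : Prop :=
  forall U : {set T}, connected_domishold R U.

End Graphs.

From HB Require Import structures.
From mathcomp Require Import all_boot all_order all_algebra.
From mathcomp Require Import zify.
Set Implicit Arguments. Unset Strict Implicit. Unset Printing Implicit Defensive.

(* In a block graph, a vertex c separates any two distinct non-adjacent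
   neighbours a, b: otherwise c together with a shortest a-b path avoiding c
   would induce a 2-connected subgraph, lying in a block that is not a clique.
   Consequently a set S is a CDS of G[U] iff S is nonempty and contains every
   cut vertex of G[U]; weight |T| on cut vertices plus 1 on every vertex, with
   threshold |T| * #(cut vertices) + 1, expresses exactly this.

   In a trivially perfect graph, if s is a neighbour of u and z a neighbour of
   s not adjacent to u, then every other neighbour of u is a neighbour of s
   (else z s u y is an induced P4 or C4), so s has larger degree.  Hence a
   vertex of maximum degree of a connected G[W] is universal in G[W], and S is
   a CDS of G[U] iff S contains a universal vertex of G[U]: weight 1 on those
   vertices and threshold 1. *)

Section Connectivity.
Variables (T : finType) (e : rel T).
Hypothesis esym : symmetric e.

Lemma adj_in_sym (A : {set T}) : symmetric (adj_in e A).
Proof. by move=> x y; rewrite /adj_in /= esym andbCA. Qed.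

Lemma connect_adj_in_sym (A : {set T}) x y :
  connect (adj_in e A) x y = connect (adj_in e A) y x.
Proof. exact/sym_connect_sym/adj_in_sym. Qed.

Lemma connect_adj_in_sub (A B : {set T}) x y : A \subset B ->
  connect (adj_in e A) x y -> connect (adj_in e B) x y.
Proof.
move=> sAB; apply: connect_sub => u v /and3P[uA vA euv]; apply: connect1.
by rewrite /adj_in /= (subsetP sAB _ uA) (subsetP sAB _ vA).
Qed.

Lemma connect_adj_in_mem (A : {set T}) x y :
  connect (adj_in e A) x y -> x \in A -> y \in A.
Proof.
case/connectP=> p + ->; elim: p x => [|z p IH] x //=.
by case/andP=> /and3P[_ zA _] /IH + _; apply.
Qed.

Lemma connect_hub (A : {set T}) h :
  (forall x, x \in A -> connect (adj_in e A) x h) ->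
  forall x y, x \in A -> y \in A -> connect (adj_in e A) x y.
Proof.
move=> toh x y xA yA; apply: connect_trans (toh _ xA) _.
by rewrite connect_adj_in_sym toh.
Qed.

Lemma path_adj_in (A : {set T}) x p :
  path e x p -> {subset x :: p <= A} -> path (adj_in e A) x p.
Proof.
elim: p x => [|z p IH] x //= /andP[exz pe] sA.
rewrite /adj_in /= !sA ?inE ?eqxx ?orbT //= exz IH // => y yp.
by rewrite sA // inE yp orbT.
Qed.

Lemma path_connect_in (A : {set T}) x p y z :
  path e x p -> {subset x :: p <= A} -> y \in x :: p -> z \in x :: p ->
  connect (adj_in e A) y z.
Proof.
move=> pe sA yp zp; have pA := path_adj_in pe sA.
apply: (@connect_trans _ _ x); last exact: (path_connect pA zp).
by rewrite connect_adj_in_sym; exact: (path_connect pA yp).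
Qed.

Lemma connect_path_end (A : {set T}) x p v y :
  path e x p -> uniq (x :: p) ->
  (forall z, z \in x :: p -> z != v -> z \in A) ->
  y \in x :: p -> y != v ->
  connect (adj_in e A) y x \/ connect (adj_in e A) y (last x p).
Proof.
elim: p x => [|x1 p IH] x; first by move=> _ _ _; rewrite inE => /eqP-> _; left.
rewrite /= => /andP[exx1 pe] /andP[xp up] sA yp yv.
have [vx | vx] := eqVneq v x.
  have sA1 : {subset x1 :: p <= A}.
    move=> z zp; apply: sA; first by rewrite inE zp orbT.
    by rewrite vx; apply: contraNneq xp => <-.
  right; apply: path_connect_in pe sA1 _ (mem_last _ _).
  by move: yp; rewrite inE -vx (negbTE yv).
have [-> | yx] := eqVneq y x; first by left.
have yp1 : y \in x1 :: p by move: yp; rewrite inE (negbTE yx).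
have sA1 z : z \in x1 :: p -> z != v -> z \in A.
  by move=> zp; apply: sA; rewrite inE zp orbT.
case: (IH x1 pe up sA1 yp1 yv) => [yx1 | ]; last by right.
have x1A : x1 \in A by apply: (connect_adj_in_mem yx1); apply: sA.
have xA : x \in A by apply: sA; rewrite ?mem_head // eq_sym.
by left; apply: (connect_trans yx1); apply: connect1; rewrite /adj_in /= x1A xA esym.
Qed.

Lemma cds_in_cut_vertex (U S : {set T}) c :
  cds_in e U S -> cut_vertex_in e U c -> c \in S.
Proof.
case/and3P=> sSU dom /andP[_ Sconn].
case/andP=> _ /exists_inP[x xUc /exists_inP[y yUc /negP sep]].
apply/negPn/negP => cS; apply: sep.
have sSUc : S \subset U :\ c.
  apply/subsetP => z zS; rewrite in_setD1 (subsetP sSU _ zS) andbT.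
  by apply: contraNneq cS => <-.
have toS z : z \in U :\ c -> exists2 s, s \in S & connect (adj_in e (U :\ c)) z s.
  move=> zUc; have [zS | zS] := boolP (z \in S); first by exists z.
  have zUS : z \in U :\: S by rewrite inE zS; case/setD1P: zUc.
  have /exists_inP[s sS ezs] := forall_inP dom z zUS.
  by exists s => //; apply: connect1; rewrite /adj_in /= zUc ezs (subsetP sSUc).
have [sx sxS xsx] := toS x xUc; have [sy syS ysy] := toS y yUc.
apply: (connect_trans xsx); apply: (@connect_trans _ _ sy); last by rewrite connect_adj_in_sym.
exact: connect_adj_in_sub sSUc (forall_inP (forall_inP Sconn _ sxS) _ syS).
Qed.

End Connectivity.

Lemma connected_domishold_nat (T : finType) (e : rel T) (R : realFieldType)
    (U : {set T}) (w : T -> nat) (t : nat) :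
  (connected_in e U -> forall S : {set T}, S \subset U ->
     cds_in e U S = (t <= \sum_(x in S) w x)%N) ->
  connected_domishold e R U.
Proof.
move=> cdsE /cdsE {}cdsE; exists (fun x => (w x)%:R%R), t%:R%R; split=> [x|].
  exact: Num.Theory.ler0n.
split=> [|S sSU]; first exact: Num.Theory.ler0n.
by rewrite -GRing.natr_sum Num.Theory.ler_nat cdsE.
Qed.

Lemma sum_mem_card (T : finType) (S K : {set T}) :
  \sum_(x in S) (x \in K : nat) = #|S :&: K|.
Proof.
rewrite -big_mkcondr /= -sum1_card.
by apply: eq_bigl => x; rewrite !inE.
Qed.

Section BlockGraphs.
Variables (T : finType) (e : rel T).
Hypothesis esym : symmetric e.
Hypothesis eirr : irreflexive e.

Definition nonadjacent_neighbours_separated := forall c a b,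
  e c a -> e c b -> a != b -> ~~ e a b -> ~~ connect (adj_in e (~: [set c])) a b.

Lemma cycle_biconn c a p :
  path e a p -> uniq (a :: p) -> c \notin a :: p -> e c a -> e c (last a p) ->
  biconn e (c |: [set x in a :: p]).
Proof.
move=> pe up cp eca ecb; set B := c |: _.
have inB x : (x \in B) = (x == c) || (x \in a :: p) by rewrite !inE.
have cB : c \in B by rewrite inB eqxx.
have edge_c x (A : {set T}) : (x == a) || (x == last a p) ->
    x \in A -> c \in A -> adj_in e A x c.
  by move=> xab xA cA; rewrite /adj_in /= xA cA esym; case/orP: xab => /eqP->.
have connD1 v x y : x \in B :\ v -> y \in B :\ v -> connect (adj_in e (B :\ v)) x y.
  have [-> | vc] := eqVneq v c.
    apply: (connect_hub esym) => // z /setD1P[zc zB].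
    apply: (path_connect_in esym) pe _ _ (mem_head _ _).
      by move=> w wp; rewrite in_setD1 inB wp orbT andbT; apply: contraNneq cp => <-.
    by move: zB; rewrite inB (negbTE zc).
  have cBv : c \in B :\ v by rewrite in_setD1 eq_sym vc.
  apply: (connect_hub esym) => // z /setD1P[zv zB].
  have [-> | zc] := eqVneq z c; first exact: connect0.
  have zp : z \in a :: p by move: zB; rewrite inB (negbTE zc).
  have sBv w : w \in a :: p -> w != v -> w \in B :\ v.
    by move=> wp wv; rewrite in_setD1 inB wv wp orbT.
  have zBv : z \in B :\ v by rewrite in_setD1 zv zB.
  case: (connect_path_end esym pe up sBv zp zv) => zend; apply: (connect_trans zend);
    by apply/connect1/edge_c; rewrite ?eqxx ?orbT ?(connect_adj_in_mem zend zBv).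
apply/andP; split.
  rewrite /connected_in; apply/andP; split; first by apply/set0Pn; exists c.
  apply/forall_inP=> x xB; apply/forall_inP=> y yB; apply: (connect_hub esym) => // z zB.
  have [-> | zc] := eqVneq z c; first exact: connect0.
  have zBc : z \in B :\ c by rewrite in_setD1 zc.
  have aBc : a \in B :\ c.
    by rewrite in_setD1 inB mem_head orbT andbT; apply: contraNneq cp => <-; exact: mem_head.
  apply: connect_trans (connect_adj_in_sub (subD1set B c) (connD1 c z a zBc aBc)) _.
  by apply/connect1/edge_c; rewrite ?eqxx // inB mem_head orbT.
apply/forallP=> v; apply/negP => /andP[_ /exists_inP[x xBv /exists_inP[y yBv]]].
by rewrite connD1.
Qed.

Lemma block_graph_separated :
  block_graph e -> nonadjacent_neighbours_separated.
Proof.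
move=> bg c a b eca ecb neqab neab; apply/negP => /connectP[p0 /shortenP[p pc up _]].
move=> lastp; have ac : a != c by apply: contraTneq eca => ->; rewrite eirr.
have cp : c \notin a :: p.
  apply/negP => /(path_connect pc)/connect_adj_in_mem.
  by rewrite !inE eqxx ac => /(_ isT).
have pe : path e a p by apply: sub_path pc => x y /and3P[].
have ecl : e c (last a p) by rewrite -lastp.
have [B maxB sB] := maxset_exists (cycle_biconn pe up cp eca ecl).
have /forall_inP cliqueB := implyP (forallP bg B) maxB.
have inB x : x \in a :: p -> x \in B.
  by move=> xp; rewrite (subsetP sB) // in_setU1 in_set xp orbT.
have bB : b \in B by rewrite inB // lastp mem_last.
move: (forall_inP (cliqueB a (inB _ (mem_head _ _))) b bB).
by rewrite neqab (negbTE neab).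
Qed.

Hypothesis separated : nonadjacent_neighbours_separated.

Lemma separated_cut_vertex (U : {set T}) z a b :
  z \in U -> a \in U -> b \in U -> e z a -> e z b -> a != b -> ~~ e a b ->
  cut_vertex_in e U z.
Proof.
move=> zU aU bU eza ezb neqab neab; rewrite /cut_vertex_in zU.
have zx x : e z x -> x != z by move=> ezx; apply: contraTneq ezx => ->; rewrite eirr.
apply/exists_inP; exists a; first by rewrite !inE zx.
apply/exists_inP; exists b; first by rewrite !inE zx.
apply: contraNN (separated eza ezb neqab neab); apply: connect_adj_in_sub.
by apply/subsetP => x /setD1P[xz _]; rewrite !inE.
Qed.

Section CutClosed.
Variables (U S : {set T}).
Hypothesis sSU : S \subset U.
Hypothesis cutS : [set c | cut_vertex_in e U c] \subset S.

(* Along a path of G[U] starting in S, no vertex gets two steps away from S: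
   the intermediate vertex would be a cut vertex, hence in S. *)
Lemma cut_closed_reach s x : s \in S -> connect (adj_in e U) s x ->
  (x \in S /\ connect (adj_in e S) s x) \/
  (x \notin S /\ exists2 s', s' \in S & e x s' && connect (adj_in e S) s s').
Proof.
move=> sS /connectP[p + ->]; elim/last_ind: p => [|p y IH] /=; first by left.
rewrite rcons_path last_rcons => /andP[/IH IHp /and3P[zU yU ezy]].
set z := last s p in IHp ezy zU *.
case: IHp => [[zS sz] | [zS [s' s'S /andP[ezs' ss']]]].
  have [yS | yS] := boolP (y \in S); [left | right]; split=> //.
    by apply: connect_trans sz (connect1 _); rewrite /adj_in /= zS yS ezy.
  by exists z; rewrite // esym ezy.
have [eq_ys' | ys'] := eqVneq y s'; first by left; rewrite eq_ys'; split.
have eys' : e y s'.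
  apply/negPn/negP => neys'; case/negP: zS; apply: (subsetP cutS); rewrite inE.
  exact: separated_cut_vertex zU yU (subsetP sSU _ s'S) ezy ezs' ys' neys'.
have [yS | yS] := boolP (y \in S); [left | right]; split=> //.
  by apply: connect_trans ss' (connect1 _); rewrite /adj_in /= s'S yS esym eys'.
by exists s'; rewrite ?eys'.
Qed.

Lemma cut_closed_cds : connected_in e U -> cds_in e U S = (S != set0).
Proof.
case/andP=> _ cU; apply/idP/idP => [/and3P[_ _ /andP[nS _]] // | /set0Pn[s0 s0S]].
have connU x y : x \in S -> y \in U -> connect (adj_in e U) x y.
  by move=> xS yU; apply: (forall_inP (forall_inP cU _ (subsetP sSU _ xS)) _ yU).
rewrite /cds_in sSU /=; apply/andP; split.
  apply/forall_inP => x /setDP[xU xS]; apply/exists_inP.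
  have [[xS' _] | [_ [s' s'S /andP[exs' _]]]] := cut_closed_reach s0S (connU _ _ s0S xU).
    by rewrite xS' in xS.
  by exists s'.
rewrite /connected_in; apply/andP; split; first by apply/set0Pn; exists s0.
apply/forall_inP => x xS; apply/forall_inP => y yS.
have [[_ //] | [yS' _]] := cut_closed_reach xS (connU _ _ xS (subsetP sSU _ yS)).
by rewrite yS in yS'.
Qed.

End CutClosed.

Lemma separated_cds (U S : {set T}) : connected_in e U -> S \subset U ->
  cds_in e U S = ([set c | cut_vertex_in e U c] \subset S) && (S != set0).
Proof.
move=> cU sSU; have [cutS | ncutS] := boolP (_ \subset S); first exact: cut_closed_cds.
apply/negbTE; apply: contra ncutS => cdsS; apply/subsetP => c; rewrite inE.
exact: cds_in_cut_vertex.
Qed.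

End BlockGraphs.

Lemma path_exit (T : eqType) (r : rel T) (N : pred T) v p :
  path r v p -> N v -> ~~ N (last v p) -> exists x y, [/\ r x y, N x & ~~ N y].
Proof.
elim: p v => [|z p IH] v /=; first by move=> _ ->.
case/andP=> rvz pp Nv; have [Nz | nNz] := boolP (N z); first exact: IH.
by move=> _; exists v, z.
Qed.

Section TriviallyPerfect.
Variables (T : finType) (e : rel T).
Hypothesis esym : symmetric e.
Hypothesis eirr : irreflexive e.

Definition neighbours_in (W : {set T}) x := [set y in W | e x y].

Definition universal_in (W : {set T}) u := [forall y in W, (y != u) ==> e u y].

Lemma universal_cds (U S : {set T}) u : S \subset U -> u \in S -> universal_in U u ->
  cds_in e U S.
Proof.
move=> sSU uS /forall_inP uU.
have euS x : x \in U -> x != u -> e x u by move=> xU xu; rewrite esym (implyP (uU x xU)).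
rewrite /cds_in sSU /=; apply/andP; split.
  apply/forall_inP => x /setDP[xU xS]; apply/exists_inP; exists u => //.
  by apply: euS xU _; apply: contraNneq xS => ->.
apply/andP; split; first by apply/set0Pn; exists u.
apply/forall_inP => x xS; apply/forall_inP => y yS; apply: (connect_hub esym) => // w wS.
have [-> | wu] := eqVneq w u; first exact: connect0.
by apply: connect1; rewrite /adj_in /= wS uS euS // (subsetP sSU).
Qed.

Hypothesis tp : trivially_perfect e.

Lemma tp_neighbours_subset (W : {set T}) u s z :
  e s u -> e z s -> ~~ e z u -> z != u ->
  neighbours_in W u :\ s \subset neighbours_in W s.
Proof.
move=> esu ezs nezu zu; apply/subsetP => y /setD1P[ys /setIdP[yW euy]].
rewrite inE yW /=; apply/negPn/negP => nesy.
have neq x x' : e x x' -> x != x' by move=> exx'; apply: contraTneq exx' => ->; rewrite eirr.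
have zy : z != y by apply: contraNneq nezu => ->; rewrite esym.
have d4 : distinct4 z s u y.
  by rewrite /distinct4 /= !inE !negb_or neq // zu zy neq // eq_sym ys neq.
have [nP4 nC4] := tp z s u y.
have [eyz | neyz] := boolP (e y z).
  by move: nC4; rewrite /induced_C4 d4 ezs esu euy eyz nezu nesy.
by move: nP4; rewrite /induced_P4 d4 ezs esu euy nezu nesy esym neyz.
Qed.

Lemma tp_degree_lt (W : {set T}) u s z : u \in W -> s \in W -> z \in W ->
  e s u -> e z s -> ~~ e z u -> z != u ->
  #|neighbours_in W u| < #|neighbours_in W s|.
Proof.
move=> uW sW zW esu ezs nezu zu.
have sub := tp_neighbours_subset W esu ezs nezu zu.
have sNu : s \in neighbours_in W u by rewrite inE sW esym esu.
have uNs : u \in neighbours_in W s by rewrite inE uW esu.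
have ltD1 : neighbours_in W u :\ s \proper neighbours_in W s :\ u.
  apply/properP; split.
    apply/subsetP => y yNu; rewrite in_setD1 (subsetP sub _ yNu) andbT.
    by apply: contraTneq yNu => ->; rewrite !inE eirr !andbF.
  exists z; first by rewrite !inE zu zW esym ezs.
  by rewrite !inE [e u z]esym (negbTE nezu) !andbF.
have := proper_card ltD1.
by rewrite (cardsD1 s (neighbours_in W u)) (cardsD1 u (neighbours_in W s)) sNu uNs.
Qed.

Lemma tp_connected_universal (W : {set T}) : connected_in e W ->
  exists2 u, u \in W & universal_in W u.
Proof.
case/andP=> /set0Pn[w0 w0W] cW.
have [v vW vmax] := @arg_maxnP _ w0 (mem W) (fun x => #|neighbours_in W x|) w0W.
exists v => //; apply/forall_inP => w wW; apply/implyP => wv; apply/negPn/negP => nevw.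
have /connectP[p pW lastp] := forall_inP (forall_inP cW v vW) w wW.
pose N := [pred y | (y == v) || e v y].
have [x [y [/and3P[xW yW exy] Nx]]] : exists x y, [/\ adj_in e W x y, N x & ~~ N y].
  by apply: (path_exit pW); rewrite /N /= ?eqxx // -lastp negb_or wv.
rewrite /N /= negb_or => /andP[yv nevy].
have xv : x != v by apply: contraNneq nevy => <-.
have evx : e v x by move: Nx; rewrite /N /= (negbTE xv).
have := vmax x xW; rewrite /= leqNgt => /negP; apply.
by apply: tp_degree_lt vW xW yW _ _ _ yv; rewrite esym.
Qed.

Lemma tp_cds_universal (U S : {set T}) : S \subset U -> cds_in e U S ->
  exists2 u, u \in S & universal_in U u.
Proof.
move=> sSU /and3P[_ dom cS]; have [u0 u0S u0univ] := tp_connected_universal cS.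
pose P := [pred x | (x \in S) && universal_in S x].
have [u /andP[uS /forall_inP uunivS] umax] :=
  @arg_maxnP _ u0 P (fun x => #|neighbours_in U x|) (introT andP (conj u0S u0univ)).
exists u => //; apply/forall_inP => z zU; apply/implyP => zu; apply/negPn/negP => neuz.
have zS : z \notin S by apply: contraNN neuz => zS; rewrite (implyP (uunivS z zS)).
have /exists_inP[s sS ezs] : [exists s in S, e z s] by apply: (forall_inP dom); rewrite inE zS.
have su : s != u by apply: contraTneq ezs => ->; rewrite esym.
have esu : e s u by rewrite esym (implyP (uunivS s sS)).
have nezu : ~~ e z u by rewrite esym.
have uU := subsetP sSU _ uS; have sU := subsetP sSU _ sS.
have sunivS : universal_in S s.
  apply/forall_inP => y yS; apply/implyP => ys.
  have [-> | yu] := eqVneq y u; first by [].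
  have yNu : y \in neighbours_in U u :\ s.
    by rewrite !inE ys (subsetP sSU _ yS) (implyP (uunivS y yS)).
  by move: (subsetP (tp_neighbours_subset U esu ezs nezu zu) _ yNu); rewrite inE => /andP[].
have := umax s; rewrite /P /= sS sunivS leqNgt => /(_ isT)/negP; apply.
exact: tp_degree_lt uU sU zU esu ezs nezu zu.
Qed.

Lemma tp_cds (U S : {set T}) : S \subset U ->
  cds_in e U S = (S :&: [set u in U | universal_in U u] != set0).
Proof.
move=> sSU; apply/idP/set0Pn => [cdsS | [u /setIP[uS /setIdP[_ uU]]]].
  by have [u uS uU] := tp_cds_universal sSU cdsS; exists u; rewrite !inE uS (subsetP sSU).
exact: universal_cds uS uU.
Qed.

End TriviallyPerfect.

Lemma cut_weight_threshold (T : finType) (S K : {set T}) (N : nat) : #|S| <= N ->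
  (N * #|K| + 1 <= \sum_(x in S) (N * (x \in K) + 1))%N = (K \subset S) && (S != set0).
Proof.
move=> leSN; rewrite big_split /= sum1_card -big_distrr /= sum_mem_card.
have [KS | nKS] /= := boolP (K \subset S).
  by rewrite (setIidPr KS) -card_gt0; apply/idP/idP => /=; lia.
have ltIK : #|S :&: K| < #|K|.
  apply/proper_card/properP; split; first exact: subsetIr.
  by have [x xK xS] := subsetPn nKS; exists x; rewrite // inE (negbTE xS).
apply/negbTE; rewrite -ltnNge; move: (leq_mul (leqnn N) ltIK); rewrite mulnS; lia.
Qed.

Theorem mainTheorem10 (R : realFieldType) :
  (forall (T : finType) (e : rel T), symmetric e -> irreflexive e ->
     block_graph e -> hereditarily_connected_domishold e R) /\
  (forall (T : finType) (e : rel T), symmetric e -> irreflexive e ->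
     trivially_perfect e -> hereditarily_connected_domishold e R).
Proof.
split=> T e esym eirr.
  move=> bg U; pose K := [set c | cut_vertex_in e U c].
  apply: (@connected_domishold_nat _ _ _ _ (fun x => #|T| * (x \in K) + 1) (#|T| * #|K| + 1)).
  move=> cU S sSU; have sep := block_graph_separated esym eirr bg.
  by rewrite (separated_cds esym eirr sep cU sSU) cut_weight_threshold ?max_card.
move=> tp U; pose Univ := [set u in U | universal_in e U u].
apply: (@connected_domishold_nat _ _ _ _ (fun x => (x \in Univ) : nat) 1) => _ S sSU.
by rewrite (tp_cds esym eirr tp sSU) sum_mem_card card_gt0.
Qed.
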